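(* Assume the setting below and $p>\sum_{k=0}^{N-1}L_k$. For $0\le j\le N-1$ and $x\in\mathbb R$ define $$\alpha_{GB,j}(x)=\sum_{k=j}^{j+N-1}L^G_k\,C\left\lceil\frac{x-o_{k,j}+L^G_k+\sum_{q=j}^{k}L_q}{p-\sum_{q=j}^{j+N-1}L_q}\right\rceil .$$ Then for all $s\in\mathbb R$ and $t\ge0$, $$C\cdot\Delta t_{GB}(s,s+t)\le\max_{0\le j\le N-1}\alpha_{GB,j}\big(t-\Delta t_{ST}(s,s+t)\big).$$
   Context: Fix an output port with physical link rate $C>0$. Its gate control list (GCL) is periodic with period $p>0$ and contains $N\ge 1$ scheduled-traffic (ST) windows per period. Window $k\in\{0,\dots,N-1\}$ is the interval $[o_k,o_k+L_k)$, where $0\le o_0<o_1<\dots<o_{N-1}<p$, $L_k\ge 0$, $o_k+L_k\le o_{k+1}$ for $k<N-1$ and $o_{N-1}+L_{N-1}\le o_0+p$. Indices are extended to all integers periodically: $o_{k+N}=o_k+p$, $L_{k+N}=L_k$. Relative offsets are $o_{j,i}=o_j-o_i$. Let $S=\bigcup_{k\in\mathbb Z}[o_k,o_k+L_k)$ and for $s\le t$ let $\Delta t_{ST}(s,t)$ be the Lebesgue measure of $S\cap[s,t]$. Guard bands: for each $k$, $L^G_k=\min\{\ell/C,\ o_k-(o_{k-1}+L_{k-1})\}$, where $\ell>0$ is the maximal frame size of the AVB flows of classes $M_1,\dots,M_i$ competing at the port; thus $L^G_{k+N}=L^G_k$ and the guard band of window $k$ is $[o_k-L^G_k,o_k)$.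 Let $G=\bigcup_{k\in\mathbb Z}[o_k-L^G_k,o_k)$ and for $s\le t$ let $\Delta t_{GB}(s,t)$ be the Lebesgue measure of $G\cap[s,t]$. *)

From HB Require Import structures.
From mathcomp Require Import all_boot all_order all_algebra.
From mathcomp Require Import all_classical all_reals all_analysis.
Set Implicit Arguments. Unset Strict Implicit. Unset Printing Implicit Defensive.
Import Order.TTheory GRing.Theory Num.Theory.
Local Open Scope ring_scope.
Local Open Scope classical_set_scope.

Section GCL.
Variables (R : realType) (N : nat) (p : R) (o L : nat -> R).

(* periodic extension: o_{k} for k : int, o_{k+N} = o_k + p *)
Definition oe (k : int) : R :=
  o (absz (k %% (N:int))%Z) + ((k %/ (N:int))%Z)%:~R * p.
Definition Le (k : int) : R := L (absz (k %% (N:int))%Z).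

Definition LG (C ell : R) (k : int) : R :=
  Num.min (ell / C) (oe k - (oe (k - 1) + Le (k - 1))).

Definition ST_set : set R :=
  [set x | exists k : int, oe k <= x < oe k + Le k].
Definition GB_set (C ell : R) : set R :=
  [set x | exists k : int, oe k - LG C ell k <= x < oe k].

Definition cc (a b : R) : set R := [set x | a <= x <= b].

Definition dt_ST (a b : R) : \bar R := lebesgue_measure (ST_set `&` cc a b).
Definition dt_GB (C ell a b : R) : \bar R :=
  lebesgue_measure (GB_set C ell `&` cc a b).

Definition alpha_GB (C ell : R) (j : nat) (x : R) : R :=
  \sum_(j <= k < j + N)
    LG C ell k%:Z * C *
    (Num.ceil ((x - (oe k%:Z - oe j%:Z) + LG C ell k%:Z
                + \sum_(j <= q < k.+1) Le q%:Z)
               / (p - \sum_(j <= q < j + N) Le q%:Z)))%:~R.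

End GCL.

From HB Require Import structures.
From mathcomp Require Import all_boot all_order all_algebra.
From mathcomp Require Import all_classical all_reals all_analysis.
From mathcomp Require Import ring lra zify.
Import Order.TTheory GRing.Theory Num.Theory.
Local Open Scope ring_scope.
Local Open Scope classical_set_scope.

(* Index the ST windows by k : int (extended periodically) and, for an
   interval [s, s+t], let j0 be the first window starting after s.  A
   guard-band instant z of [s, s+t) lies in the band of some window
   i = j0 + u + m N with u < N.  The ST time of [s, s+t] is contained in
   [s, o_{j0}], in the windows j0, ..., i-1 and in [z, s+t], so the idle
   time x = t - Dt_ST(s, s+t) exceeds the idle gaps between the windows
   j0, ..., i minus the band length.  These gaps amount to m full periods
   of idle time p - sum L plus the gaps before class u, which forces m to
   be smaller than the ceiling appearing in alpha_{GB,j} for j = j0 mod N.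
   Hence the guard bands met by [s, s+t) are covered by at most that many
   bands of each class u, each of length L^G. *)

Section LebesgueOuterBounds.
Variable R : realType.
Local Notation lam := (@lebesgue_measure R).

(* Lebesgue measure, evaluated on arbitrary sets, is the Lebesgue outer
   measure: it is monotone and subadditive. *)
Lemma lebesgue_le {A B : set R} : A `<=` B -> (lam A <= lam B)%E.
Proof.
move=> AB; rewrite /lebesgue_measure /lebesgue_stieltjes_measure /measure_extension.
exact: le_mu_ext.
Qed.

Lemma lebesgue_setU_le (A B : set R) : (lam (A `|` B) <= lam A + lam B)%E.
Proof.
rewrite /lebesgue_measure /lebesgue_stieltjes_measure /measure_extension.
exact: outer_measureU2.
Qed.

Lemma lebesgue_cc_le (a b : R) : a <= b -> (lam (cc a b) <= (b - a)%:E)%E.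
Proof.
move=> ab; have -> : cc a b = `[a, b] by rewrite set_itvcc.
rewrite lebesgue_measure_itv /=.
by case: ifP => _; rewrite ?EFinB // lee_fin subr_ge0.
Qed.

Lemma lebesgue_cover_le (n : nat) (P : nat -> set R) (b : nat -> R) (A : set R) :
  (forall i, (i < n)%N -> (lam (P i) <= (b i)%:E)%E) ->
  A `<=` [set z | exists2 i, (i < n)%N & P i z] ->
  (lam A <= (\sum_(i < n) b i)%:E)%E.
Proof.
elim: n A => [|n IH] A hP hA.
  rewrite big_ord0 (_ : A = set0) ?measure0 //.
  by apply/seteqP; split => // z /hA [].
rewrite big_ord_recr /= EFinD.
have sub : A `<=` [set z | exists2 i, (i < n)%N & P i z] `|` P n.
  move=> z /hA [i ilt Pi]; case: (ltnP i n) => hi; first by left; exists i.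
  by right; rewrite (_ : n = i) //; lia.
apply: le_trans (lebesgue_le sub) _; apply: le_trans (lebesgue_setU_le _ _) _.
apply: leeD; last exact: hP.
by apply: IH => [i hi|z //]; apply: hP; lia.
Qed.

End LebesgueOuterBounds.
Arguments lebesgue_le {R A B}.
Arguments lebesgue_setU_le {R}.
Arguments lebesgue_cc_le {R a b}.
Arguments lebesgue_cover_le {R n P b A}.

Lemma fine_le {R : realType} {x : \bar R} {B : R} :
  (0 <= x)%E -> (x <= B%:E)%E -> fine x <= B.
Proof. by case: x => //= r _; rewrite lee_fin. Qed.

Section PeriodicSums.
Variables (V : zmodType) (n : nat) (f : int -> V).
Hypothesis f_periodic : forall i, f (i + n%:Z) = f i.

Lemma sum_period (j : int) : \sum_(r < n) f (j + r%:Z) = \sum_(r < n) f r%:Z.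
Proof.
case: n f_periodic => [|n'] hf; first by rewrite !big_ord0.
have step i : \sum_(r < n'.+1) f (i + 1 + r%:Z) = \sum_(r < n'.+1) f (i + r%:Z).
  rewrite big_ord_recr [RHS]big_ord_recl /= addr0 addrC.
  rewrite (_ : i + 1 + n'%:Z = i + n'.+1%:Z) ?hf; last by rewrite intS; ring.
  congr (_ + _); apply: eq_bigr => r _ /=.
  by congr f; rewrite /bump /= add1n intS; ring.
have up (k : nat) i :
    \sum_(r < n'.+1) f (i + k%:Z + r%:Z) = \sum_(r < n'.+1) f (i + r%:Z).
  elim: k => [|k IH]; first by rewrite addr0.
  rewrite -IH -(step (i + k%:Z)); apply: eq_bigr => r _.
  by congr f; rewrite intS; ring.
have -> : \sum_(r < n'.+1) f r%:Z = \sum_(r < n'.+1) f (0 + r%:Z).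
  by apply: eq_bigr => r _; rewrite add0r.
case: j => k; first by rewrite -(up k 0) add0r.
by rewrite -(up k.+1 (Negz k)) NegzE addNr.
Qed.

Lemma sum_split_period (j : int) (u m : nat) :
  \sum_(r < u + m * n) f (j + r%:Z) =
  \sum_(r < u) f (j + r%:Z) + (\sum_(r < n) f (j + r%:Z)) *+ m.
Proof.
elim: m => [|m IH]; first by rewrite mul0n addn0 mulr0n addr0.
rewrite mulSnr addnA big_split_ord /= IH -addrA; congr (_ + _).
rewrite mulrSr; congr (_ + _).
rewrite (sum_period j) -(sum_period (j + (u + m * n)%:Z)).
by apply: eq_bigr => r _; rewrite PoszD addrA.
Qed.

End PeriodicSums.
Arguments sum_period {V n f}.
Arguments sum_split_period {V n f}.

Lemma sum_nat_shift (V : zmodType) (F : nat -> V) (a n : nat) :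
  \sum_(a <= k < a + n) F k = \sum_(r < n) F (a + r)%N.
Proof.
rewrite -{1}[a]add0n big_addn addKn big_mkord.
by apply: eq_bigr => r _; rewrite addnC.
Qed.

Section PeriodicSchedule.
Context {R : realType} {C p ell : R} {N : nat} (o L : nat -> R).
Hypotheses (hN : (1 <= N)%N) (hC : 0 < C) (hell : 0 < ell) (hp : 0 < p)
  (hL : forall k : nat, (k < N)%N -> 0 <= L k)
  (hwin : forall k : nat, (k.+1 < N)%N -> o k + L k <= o k.+1)
  (hwinlast : o N.-1 + L N.-1 <= o 0%N + p)
  (hpL : \sum_(k < N) L k < p).

Local Notation OE := (oe N p o).
Local Notation LE := (Le N L).
Local Notation LGG := (LG N p o L C ell).

Lemma N_neq0 : N%:Z != 0.
Proof. by rewrite eqz_nat -lt0n. Qed.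

Lemma oeE (d : int) (r : nat) :
  (r < N)%N -> OE (d * N%:Z + r%:Z) = o r + d%:~R * p.
Proof.
by move=> rN; rewrite /oe modzMDl divzMDl ?N_neq0 // modz_small ?divz_small ?addr0.
Qed.

Lemma LeE (d : int) (r : nat) : (r < N)%N -> LE (d * N%:Z + r%:Z) = L r.
Proof. by move=> rN; rewrite /Le modzMDl modz_small. Qed.

Lemma int_decomp (i : int) :
  exists (d : int) (r : nat), (r < N)%N /\ i = d * N%:Z + r%:Z.
Proof.
exists (i %/ N%:Z)%Z, (absz (i %% N%:Z)%Z).
have e : (absz (i %% N%:Z)%Z)%:Z = (i %% N%:Z)%Z by rewrite gez0_abs ?modz_ge0 ?N_neq0.
by split; [rewrite -ltz_nat e ltz_pmod | rewrite e -divz_eq].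
Qed.

Lemma oe_shift (i b : int) : OE (i + b * N%:Z) = OE i + b%:~R * p.
Proof.
have [d [r [rN ->]]] := int_decomp i.
rewrite (_ : _ + b * N%:Z = (d + b) * N%:Z + r%:Z); last by ring.
by rewrite !oeE // rmorphD /=; ring.
Qed.

Lemma Le_shift (i b : int) : LE (i + b * N%:Z) = LE i.
Proof.
have [d [r [rN ->]]] := int_decomp i.
rewrite (_ : _ + b * N%:Z = (d + b) * N%:Z + r%:Z); last by ring.
by rewrite !LeE.
Qed.

Lemma LG_shift (i b : int) : LGG (i + b * N%:Z) = LGG i.
Proof.
rewrite /LG (_ : i + b * N%:Z - 1 = (i - 1) + b * N%:Z); last by ring.
by rewrite !oe_shift Le_shift; congr Num.min; ring.
Qed.

Lemma Le_ge0 (i : int) : 0 <= LE i.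
Proof. by have [d [r [rN ->]]] := int_decomp i; rewrite LeE // hL. Qed.

Lemma window_end_le_next (i : int) : OE i + LE i <= OE (i + 1).
Proof.
have [d [r [rN ->]]] := int_decomp i; rewrite oeE // LeE //.
case: (ltnP r.+1 N) => hr.
  rewrite (_ : _ + 1 = d * N%:Z + r.+1%:Z) ?oeE //; last by rewrite intS; ring.
  by have := hwin r hr; lra.
have er : r = N.-1 by lia.
have eN : (N.-1)%:Z + 1 = N%:Z by rewrite addrC -intS prednK.
rewrite (_ : _ + 1 = (d + 1) * N%:Z + 0%:Z); last by rewrite er -addrA eN; ring.
by rewrite oeE // rmorphD /= er; have := hwinlast; lra.
Qed.

Lemma LG_ge0 (i : int) : 0 <= LGG i.
Proof.
rewrite /LG le_min; apply/andP; split; first by rewrite divr_ge0 // ltW.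
by have := window_end_le_next (i - 1); rewrite subrK subr_ge0.
Qed.

Lemma oe_le (i k : int) : i <= k -> OE i <= OE k.
Proof.
move=> ik; have [n ->] : exists n : nat, k = i + n%:Z.
  by exists (absz (k - i)); rewrite gez0_abs ?subr_ge0 // addrCA subrr addr0.
elim: n => [|n IH]; first by rewrite addr0.
apply: le_trans IH _.
rewrite (_ : i + n.+1%:Z = i + n%:Z + 1); last by rewrite intS; ring.
by have := window_end_le_next (i + n%:Z); have := Le_ge0 (i + n%:Z); lra.
Qed.

Lemma window_end_le (i k : int) : i < k -> OE i + LE i <= OE k.
Proof.
move=> ik; apply: le_trans (window_end_le_next i) _; apply: oe_le.
by rewrite -ltzD1 ltrD2r.
Qed.

Definition idle (i : int) : R := OE (i + 1) - OE i - LE i.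

Lemma idle_ge0 (i : int) : 0 <= idle i.
Proof. by rewrite /idle; have := window_end_le_next i; lra. Qed.

Lemma idle_periodic (i : int) : idle (i + N%:Z) = idle i.
Proof.
rewrite /idle (_ : i + N%:Z + 1 = (i + 1) + 1 * N%:Z); last by ring.
rewrite (_ : i + N%:Z = i + 1 * N%:Z); last by ring.
by rewrite !oe_shift Le_shift; ring.
Qed.

Lemma Le_periodic (i : int) : LE (i + N%:Z) = LE i.
Proof. by rewrite -[N%:Z]mul1r Le_shift. Qed.

Lemma oe_telescope (j : int) (n : nat) :
  OE (j + n%:Z) - OE j = \sum_(r < n) (LE (j + r%:Z) + idle (j + r%:Z)).
Proof.
elim: n => [|n IH]; first by rewrite big_ord0 addr0 subrr.
rewrite big_ord_recr /= -IH /idle (_ : j + n.+1%:Z = j + n%:Z + 1); first ring.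
by rewrite intS; ring.
Qed.

Lemma sum_Le_period (j : int) : \sum_(r < N) LE (j + r%:Z) = \sum_(k < N) L k.
Proof.
rewrite (sum_period Le_periodic); apply: eq_bigr => k _.
by have := @LeE 0 k (ltn_ord k); rewrite mul0r add0r.
Qed.

Definition period_idle : R := p - \sum_(k < N) L k.

Lemma period_idle_gt0 : 0 < period_idle.
Proof. by rewrite subr_gt0. Qed.

Lemma sum_idle_period (j : int) : \sum_(r < N) idle (j + r%:Z) = period_idle.
Proof.
have := oe_telescope j N; rewrite big_split /= sum_Le_period.
by rewrite -[N%:Z]mul1r oe_shift /period_idle; lra.
Qed.

Lemma first_window_after (s : R) :
  exists j0 : int, OE (j0 - 1) <= s /\ s < OE j0.
Proof.
set d := Num.floor ((s - o 0%N) / p).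
have lo : OE (d * N%:Z + 0%:Z) <= s.
  rewrite oeE //; have := floor_le ((s - o 0%N) / p).
  by rewrite -/d ler_pdivlMr //; lra.
have hi : s < OE (d * N%:Z + N%:Z).
  rewrite (_ : _ + N%:Z = (d + 1) * N%:Z + 0%:Z) ?oeE //; last by ring.
  have := floorD1_gt ((s - o 0%N) / p).
  by rewrite -/d ltr_pdivrMr // rmorphD /=; lra.
pose P n := s < OE (d * N%:Z + n%:Z).
have [m Pm m_min] := ex_minnP (ex_intro P N hi).
have m_gt0 : (0 < m)%N.
  by rewrite lt0n; apply/negP => /eqP m0; move: Pm; rewrite /P m0 ltNge lo.
exists (d * N%:Z + m%:Z); split => //.
rewrite (_ : _ - 1 = d * N%:Z + (m.-1)%:Z); last first.
  by rewrite -{1}(prednK m_gt0) intS; ring.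
by rewrite leNgt; apply/negP => /m_min; rewrite -ltnS prednK // ltnn.
Qed.

Definition idle_time (s t : R) : R := t - fine (dt_ST N p o L s (s + t)).

Lemma idle_time_ge0 (s t : R) : 0 <= t -> 0 <= idle_time s t.
Proof.
move=> ht; have st : s <= s + t by lra.
have sub : ST_set N p o L `&` cc s (s + t) `<=` cc s (s + t) by move=> y [].
have := fine_le (measure_ge0 _ _) (le_trans (lebesgue_le sub) (lebesgue_cc_le st)).
by rewrite /idle_time /dt_ST; lra.
Qed.

(* Let s <= o_{j0} and let z in [s, s+t) lie in the guard band
   of window j0+n.  The ST time of [s, s+t] is contained in [s, o_{j0}], in
   the windows j0, ..., j0+n-1 and in [z, s+t]; hence the idle time of
   [s, s+t] exceeds the idle gaps between these windows minus the band. *)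
Lemma idle_time_gt (s t z : R) (j0 : int) (n : nat) :
  s <= OE j0 -> s <= z -> z < s + t ->
  OE (j0 + n%:Z) - LGG (j0 + n%:Z) <= z -> z < OE (j0 + n%:Z) ->
  \sum_(r < n) idle (j0 + r%:Z) - LGG (j0 + n%:Z) < idle_time s t.
Proof.
move=> sj0 sz zt bz zi; set i := j0 + n%:Z.
set e := Num.min (OE i) (s + t).
have ze : z < e by rewrite lt_min zi zt.
have eO : e <= OE i by rewrite ge_min lexx.
have est : e <= s + t by rewrite ge_min lexx orbT.
pose win r := cc (OE (j0 + r%:Z)) (OE (j0 + r%:Z) + LE (j0 + r%:Z)).
pose U := [set y | exists2 r, (r < n)%N & win r y].
have ST_sub :
    ST_set N p o L `&` cc s (s + t) `<=` (cc s (OE j0) `|` U) `|` cc e (s + t).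
  move=> y [[w /andP [w1 w2]] /andP [ys yt]].
  case: (leP y (OE j0)) => y1; first by left; left; rewrite /cc /= ys y1.
  case: (leP e y) => y2; first by right; rewrite /cc /= y2 yt.
  left; right.
  have wj0 : j0 <= w.
    by rewrite leNgt; apply/negP => /window_end_le; lra.
  have wi : w < i by rewrite ltNge; apply/negP => /oe_le; lra.
  exists (absz (w - j0)).
    by rewrite -ltz_nat gez0_abs ?subr_ge0 //; move: wi; rewrite /i; lra.
  by rewrite /win gez0_abs ?subr_ge0 // addrCA subrr addr0 /cc /= w1 ltW.
have U_le : (lebesgue_measure U <= (\sum_(r < n) LE (j0 + r%:Z))%:E)%E.
  apply: (lebesgue_cover_le (P := win) (b := fun r => LE (j0 + r%:Z))) => // r _.
  rewrite -[X in (_ <= X%:E)%E](addKr (OE (j0 + r%:Z))) addrC.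
  by apply: lebesgue_cc_le; rewrite lerDl Le_ge0.
have ST_le : (dt_ST N p o L s (s + t) <=
    ((OE j0 - s) + \sum_(r < n) LE (j0 + r%:Z) + (s + t - e))%:E)%E.
  apply: le_trans (lebesgue_le ST_sub) _; apply: le_trans (lebesgue_setU_le _ _) _.
  rewrite !EFinD; apply: leeD; last exact: lebesgue_cc_le.
  apply: le_trans (lebesgue_setU_le _ _) _.
  by apply: leeD => //; exact: lebesgue_cc_le.
have := fine_le (measure_ge0 _ _) ST_le; have := oe_telescope j0 n.
by rewrite big_split /= /idle_time; lra.
Qed.

Definition band (i : int) : set R := cc (OE i - LGG i) (OE i).

Lemma band_measure_le (i : int) : (lebesgue_measure (band i) <= (LGG i)%:E)%E.
Proof.
have le : OE i - LGG i <= OE i by rewrite gerBl LG_ge0.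
by have := lebesgue_cc_le le; rewrite opprB addrCA subrr addr0.
Qed.

(* The ceiling in the summand of alpha_{GB,j0}: the number of guard bands of
   window class j0+u that can meet an interval with idle time x. *)
Definition band_count (j0 : int) (x : R) (u : nat) : int :=
  Num.ceil ((x - (OE (j0 + u%:Z) - OE j0) + LGG (j0 + u%:Z)
             + \sum_(r < u.+1) LE (j0 + r%:Z))
            / (p - \sum_(r < N) LE (j0 + r%:Z))).

Lemma band_countE (j0 : int) (x : R) (u : nat) :
  band_count j0 x u = Num.ceil ((x - \sum_(r < u) idle (j0 + r%:Z)
    + LGG (j0 + u%:Z) + LE (j0 + u%:Z)) / period_idle).
Proof.
rewrite /band_count sum_Le_period oe_telescope big_ord_recr big_split /=.
by congr (Num.ceil (_ / _)); ring.
Qed.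

Lemma sum_idle_le_period (j0 : int) (u : nat) :
  (u <= N)%N -> \sum_(r < u) idle (j0 + r%:Z) <= period_idle.
Proof.
move=> uN; rewrite -(sum_idle_period j0) -(subnKC uN) big_split_ord /= lerDl.
by apply: sumr_ge0 => r _; exact: idle_ge0.
Qed.

Lemma band_count_ge0 (j0 : int) (x : R) (u : nat) :
  0 <= x -> (u < N)%N -> 0 < LGG (j0 + u%:Z) -> 0 <= band_count j0 x u.
Proof.
move=> x0 uN LGpos; rewrite band_countE ceil_ge0 ltr_pdivlMr ?period_idle_gt0 //.
by have := @sum_idle_le_period j0 u (ltnW uN); have := Le_ge0 (j0 + u%:Z); lra.
Qed.

Lemma lt_band_count (j0 : int) (x : R) (u m : nat) :
  0 <= x -> (u < N)%N -> 0 < LGG (j0 + u%:Z) ->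
  \sum_(r < u) idle (j0 + r%:Z) + m%:R * period_idle
    - LGG (j0 + u%:Z) < x ->
  (m < absz (band_count j0 x u))%N.
Proof.
move=> x0 uN LGpos hm.
rewrite -ltz_nat gez0_abs ?band_count_ge0 // -(ltr_int R).
rewrite band_countE; apply: lt_le_trans (ceil_ge _).
rewrite ltr_pdivlMr ?period_idle_gt0 //.
by have := Le_ge0 (j0 + u%:Z); lra.
Qed.

Lemma guard_band_in_band (s t z : R) (j0 : int) :
  0 <= t -> OE (j0 - 1) <= s -> s < OE j0 ->
  GB_set N p o L C ell z -> s <= z -> z < s + t ->
  exists2 u : nat, (u < N)%N &
    exists2 m : nat, (m < absz (band_count j0 (idle_time s t) u))%N &
      band (j0 + (u + m * N)%:Z) z.
Proof.
move=> ht sj1 sj2 [i /andP [zi1 zi2]] sz zt.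
have j0i : j0 <= i.
  rewrite leNgt; apply/negP => ij0.
  have : OE i <= OE (j0 - 1) by apply: oe_le; rewrite -ltzD1 subrK.
  lra.
set n := absz (i - j0).
have iE : i = j0 + n%:Z by rewrite /n gez0_abs ?subr_ge0 // addrCA subrr addr0.
set u := (n %% N)%N; set m := (n %/ N)%N.
have nE : n = (u + m * N)%N by rewrite addnC -divn_eq.
have uN : (u < N)%N by rewrite ltn_pmod.
have LGi : LGG i = LGG (j0 + u%:Z) by rewrite iE nE PoszD PoszM addrA LG_shift.
have LGpos : 0 < LGG (j0 + u%:Z) by rewrite -LGi; lra.
exists u => //; exists m; last by rewrite -nE -iE /band /cc /= zi1 ltW.
apply: lt_band_count => //; first exact: idle_time_ge0.
rewrite iE in zi1 zi2; have := @idle_time_gt s t z j0 n (ltW sj2) sz zt zi1 zi2.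
by rewrite -iE LGi nE (sum_split_period idle_periodic) sum_idle_period mulr_natl.
Qed.

Lemma guard_band_time_le (s t : R) (j0 : int) :
  0 <= t -> OE (j0 - 1) <= s -> s < OE j0 ->
  (dt_GB N p o L C ell s (s + t) <=
   (\sum_(u < N) LGG (j0 + u%:Z) *+ absz (band_count j0 (idle_time s t) u))%:E)%E.
Proof.
move=> ht sj1 sj2.
set c := fun u => absz (band_count j0 (idle_time s t) u).
pose V := [set z | exists2 u : nat, (u < N)%N &
  exists2 m : nat, (m < c u)%N & band (j0 + (u + m * N)%:Z) z].
have GB_sub : GB_set N p o L C ell `&` cc s (s + t) `<=` cc (s + t) (s + t) `|` V.
  move=> z [GBz /andP [sz zt]]; have [->|zne] := eqVneq z (s + t).
    by left; rewrite /cc /= lexx.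
  by right; apply: guard_band_in_band => //; rewrite lt_neqAle zne.
have V_le : (lebesgue_measure V <= (\sum_(u < N) LGG (j0 + u%:Z) *+ c u)%:E)%E.
  apply: (lebesgue_cover_le
    (P := fun u => [set z | exists2 m : nat, (m < c u)%N & band (j0 + (u + m * N)%:Z) z])
    (b := fun u => LGG (j0 + u%:Z) *+ c u)) => [u uN|z //].
  rewrite /= (_ : _ *+ c u = \sum_(m < c u) LGG (j0 + u%:Z)); last first.
    by rewrite sumr_const card_ord.
  apply: (lebesgue_cover_le (P := fun m => band (j0 + (u + m * N)%:Z))
    (b := fun _ => LGG (j0 + u%:Z))) => [m _|z //].
  by rewrite /= -(LG_shift _ m) -addrA -PoszM -PoszD band_measure_le.
rewrite /dt_GB; apply: le_trans (lebesgue_le GB_sub) _.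
apply: le_trans (lebesgue_setU_le _ _) _.
rewrite -[X in (_ <= X)%E]add0e; apply: leeD => //.
by have := lebesgue_cc_le (lexx (s + t)); rewrite subrr.
Qed.

(* The bound for the window j0 following s: each counted band of class u
   contributes C L^G_{j0+u}; classes with an empty band contribute nothing. *)
Lemma guard_band_bound (s t : R) (j0 : int) :
  0 <= t -> OE (j0 - 1) <= s -> s < OE j0 ->
  (C%:E * dt_GB N p o L C ell s (s + t) <=
   (\sum_(u < N) LGG (j0 + u%:Z) * C * (band_count j0 (idle_time s t) u)%:~R)%:E)%E.
Proof.
move=> ht sj1 sj2.
have C_ge0 : (0 <= C%:E)%E by rewrite lee_fin ltW.
apply: le_trans (lee_wpmul2l C_ge0 (@guard_band_time_le s t j0 ht sj1 sj2)) _.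
rewrite -EFinM lee_fin mulr_sumr; apply: ler_sum => u _.
have [LG0|LGpos] : LGG (j0 + u%:Z) = 0 \/ 0 < LGG (j0 + u%:Z).
  by have := LG_ge0 (j0 + u%:Z); rewrite le_eqVlt => /orP [/eqP <-|->]; [left|right].
  by rewrite LG0 mul0rn !mul0r mulr0.
have c_ge0 := @band_count_ge0 j0 _ u (@idle_time_ge0 s t ht) (ltn_ord u) LGpos.
have c_nat : ((absz (band_count j0 (idle_time s t) u))%:R : R) =
    (band_count j0 (idle_time s t) u)%:~R by rewrite -{2}(gez0_abs c_ge0).
by rewrite -mulr_natr c_nat mulrA [C * _]mulrC.
Qed.

(* alpha_{GB,j} for j = j0 mod N is the bound above: the schedule is
   N-periodic, so shifting all indices by a whole number of periods changes
   neither the lengths nor the offsets o_{k,j}. *)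
Lemma alpha_GB_shift (j0 : int) (x : R) :
  alpha_GB N p o L C ell (absz (j0 %% N%:Z)%Z) x =
  \sum_(u < N) LGG (j0 + u%:Z) * C * (band_count j0 x u)%:~R.
Proof.
set j := absz (j0 %% N%:Z)%Z; set d := (j0 %/ N%:Z)%Z.
have j0E r : j0 + r%:Z = (j + r)%N%:Z + d * N%:Z.
  by rewrite PoszD /j gez0_abs ?modz_ge0 ?N_neq0 // [in LHS](divz_eq j0 N%:Z); ring.
have eO r : OE (j0 + r%:Z) = OE (j + r)%N%:Z + d%:~R * p by rewrite j0E oe_shift.
have eL r : LE (j0 + r%:Z) = LE (j + r)%N%:Z by rewrite j0E Le_shift.
have eG r : LGG (j0 + r%:Z) = LGG (j + r)%N%:Z by rewrite j0E LG_shift.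
have eO0 : OE j0 = OE j%:Z + d%:~R * p by rewrite -[j0]addr0 eO addn0.
rewrite /alpha_GB !sum_nat_shift; apply: eq_bigr => u _.
rewrite /band_count -addnS sum_nat_shift eG eO eO0.
have -> : \sum_(r < N) LE (j0 + r%:Z) = \sum_(r < N) LE (j + r)%N%:Z.
  by apply: eq_bigr => r _; rewrite eL.
have -> : \sum_(r < u.+1) LE (j0 + r%:Z) = \sum_(r < u.+1) LE (j + r)%N%:Z.
  by apply: eq_bigr => r _; rewrite eL.
by congr (_ * _ * (Num.ceil ((_ + _ + _) / _))%:~R); ring.
Qed.

Lemma absz_modN_lt (j0 : int) : (absz (j0 %% N%:Z)%Z < N)%N.
Proof. by rewrite -ltz_nat gez0_abs ?modz_ge0 ?N_neq0 ?ltz_pmod. Qed.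

End PeriodicSchedule.

Theorem theorem4 (R : realType) (C p ell : R) (N : nat) (o L : nat -> R)
  (hC : 0 < C) (hp : 0 < p) (hN : (1 <= N)%N) (hell : 0 < ell)
  (ho0 : 0 <= o 0%N)
  (hoinc : forall k : nat, (k.+1 < N)%N -> o k < o k.+1)
  (holast : o N.-1 < p)
  (hL : forall k : nat, (k < N)%N -> 0 <= L k)
  (hwin : forall k : nat, (k.+1 < N)%N -> o k + L k <= o k.+1)
  (hwinlast : o N.-1 + L N.-1 <= o 0%N + p)
  (hpL : \sum_(k < N) L k < p)
  (s t : R) (ht : 0 <= t) :
  (C%:E * dt_GB N p o L C ell s (s + t) <=
   (\big[Num.max/alpha_GB N p o L C ell 0%N
           (t - fine (dt_ST N p o L s (s + t)))]_(j < N)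
       alpha_GB N p o L C ell j (t - fine (dt_ST N p o L s (s + t))))%:E)%E.
Proof.
have [j0 [sj1 sj2]] := first_window_after o hN hp s.
apply: le_trans
  (guard_band_bound o L hN hC hell hp hL hwin hwinlast hpL s t j0 ht sj1 sj2) _.
rewrite lee_fin -(alpha_GB_shift o L hN j0).
exact: (le_bigmax _ (fun j : 'I_N => alpha_GB N p o L C ell j (idle_time o L s t))
  (Ordinal (absz_modN_lt hN j0))).
Qed.
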